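(* Let $m,n>1$ be square-free integers with $\gcd(m,n)=1$ and let $K=\mathbb{Q}(\sqrt{m},\sqrt{n})$. Then \[ \frac{1}{96\sqrt2}\, D_K^{1/4} \le M(\mathcal{O}_K). \]
   Context: For a nonconstant polynomial $f(x)=c\prod_{i=1}^d (x-\alpha_i)\in\mathbb{C}[x]$, the Mahler measure is $M(f)=|c|\prod_{|\alpha_i|\ge 1}|\alpha_i|$. For an algebraic number $\alpha$, $M(\alpha)$ is the Mahler measure of its minimal polynomial over $\mathbb{Z}$ (with content $1$). For a number field $K$ with ring of integers $\mathcal{O}_K$ and absolute discriminant $D_K$, $M(\mathcal{O}_K)=\min\{M(\alpha):\alpha\in\mathcal{O}_K,\ \mathbb{Q}(\alpha)=K\}$. *)

From HB Require Import structures.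
From mathcomp Require Import all_boot all_order all_algebra all_field.
Set Implicit Arguments. Unset Strict Implicit. Unset Printing Implicit Defensive.
Import Order.TTheory GRing.Theory Num.Theory.
Local Open Scope ring_scope.

Definition squarefree (m : nat) : Prop :=
  forall p : nat, prime p -> ~~ (p * p %| m)%N.

Definition biquad (m n : nat) (x : algC) : Prop :=
  exists a b c d : rat,
     x = ratr a + ratr b * sqrtC m%:R + ratr c * sqrtC n%:R
         + ratr d * (sqrtC m%:R * sqrtC n%:R).

Definition ring_of_integers (K : algC -> Prop) (x : algC) : Prop :=
  K x /\ x \in Aint.

(* Q(alpha): the smallest subfield of algC containing alpha
   (for algebraic alpha, Q(alpha) = Q[alpha]) *)
Definition Qadj (alpha x : algC) : Prop :=
  exists q : {poly rat}, x = (map_poly ratr q).[alpha].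

Definition generates (alpha : algC) (K : algC -> Prop) : Prop :=
  forall x, Qadj alpha x <-> K x.

(* Mahler measure of a polynomial over algC:
   M(f) = |c| * prod_{roots z} max(1, |z|), roots counted with multiplicity *)
Definition poly_roots (f : {poly algC}) : seq algC :=
  sval (closed_field_poly_normal f).

Definition mahler_poly (f : {poly algC}) : algC :=
  `|lead_coef f| * \prod_(z <- poly_roots f) Num.max 1 `|z|.

(* p is the minimal polynomial of alpha over Z with content 1
   (unique up to sign, which does not affect the Mahler measure):
   nonzero, vanishes at alpha, of least degree among such integer
   polynomials, and primitive (gcd of coefficients is 1). *)
Definition minpolyZ (alpha : algC) (p : {poly int}) : Prop :=
  [/\ p != 0,
      root (map_poly intr p) alpha,
      (forall q : {poly int}, q != 0 -> root (map_poly intr q) alpha ->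
          (size p <= size q)%N)
    & `|zcontents p|%N = 1%N].

Definition mahler_alg_is (alpha : algC) (M : algC) : Prop :=
  exists2 p, minpolyZ alpha p & M = mahler_poly (map_poly intr p).

Definition integral_basis (O : algC -> Prop) (w : 'I_4 -> algC) : Prop :=
  [/\ forall i, O (w i),
      (forall x, O x -> exists c : 'I_4 -> int, x = \sum_i (c i)%:~R * w i)
    & (forall c : 'I_4 -> int, \sum_i (c i)%:~R * w i = 0 -> forall i, c i = 0)].

(* a complete list of the 4 embeddings of a quartic field K into C:
   every embedding K -> C extends to a ring morphism algC -> algC; we ask for
   4 ring morphisms with pairwise distinct restrictions to K *)
Definition all_embeddings (K : algC -> Prop) (s : 'I_4 -> {rmorphism algC -> algC}) : Prop :=
  forall i j, i != j -> exists2 x, K x & s i x != s j x.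

Definition abs_disc (w : 'I_4 -> algC) (s : 'I_4 -> {rmorphism algC -> algC}) : algC :=
  `|\det (\matrix_(i, j) s i (w j)) ^+ 2|.

From HB Require Import structures.
From mathcomp Require Import all_boot all_order all_algebra all_field.
From mathcomp Require Import ring.
Import Order.TTheory GRing.Theory Num.Theory.
Local Open Scope ring_scope.

(* The order Z[1, sqrt m, sqrt n, sqrt m sqrt n] sits inside O_K, and its
   discriminant is (4 sqrt m sqrt n)^4, so D_K^(1/4) <= 4 sqrt(mn).  On the other
   side, the four conjugates of alpha = a + b sqrt m + c sqrt n + d sqrt(mn) are
   the sign changes of the coefficients, so suitable signed sums and products of
   at most two conjugates isolate 4 d sqrt(mn), or 16 b c sqrt(mn) when d = 0.
   These are algebraic integers, hence (mn, m, n being squarefree) at least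
   sqrt(mn) in modulus, and at most 8 M(alpha) by the definition of M.  Hence
   D_K^(1/4) <= 32 M(alpha). *)

Lemma max1_norm_ge1 (z : algC) : 1 <= Num.max 1 `|z|.
Proof. by rewrite comparable_le_max ?lexx // real_comparable ?realE ?ler01 ?normr_ge0. Qed.

Lemma norm_le_max1 (z : algC) : `|z| <= Num.max 1 `|z|.
Proof.
by rewrite comparable_le_max ?lexx ?orbT // real_comparable ?realE ?ler01 ?normr_ge0.
Qed.

Lemma prod_max1_norm_ge1 (t : seq algC) : 1 <= \prod_(z <- t) Num.max 1 `|z|.
Proof.
elim: t => [|z t IH]; first by rewrite big_nil.
by rewrite big_cons (le_trans IH) // ler_peMl ?max1_norm_ge1 ?(le_trans ler01 IH).
Qed.

Lemma prod_norm_le_prod_max1 {r t : seq algC} :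
  uniq r -> {subset r <= t} ->
  \prod_(z <- r) `|z| <= \prod_(z <- t) Num.max 1 `|z|.
Proof.
elim: r t => [|x r IH] t; first by rewrite big_nil => _ _; apply: prod_max1_norm_ge1.
move=> /andP [xr ur] srt.
have xt : x \in t by apply: srt; rewrite mem_head.
rewrite big_cons (big_rem x xt) /= ler_pM ?normr_ge0 ?prodr_ge0 ?norm_le_max1 //.
apply: IH => // y yr; apply: rem_mem; last by apply: srt; rewrite inE yr orbT.
by apply: contraNneq xr => <-.
Qed.

Lemma root_mem_poly_roots {f : {poly algC}} {z : algC} :
  f != 0 -> root f z -> z \in poly_roots f.
Proof.
rewrite /poly_roots; case: (closed_field_poly_normal f) => r /= fE f0.
by rewrite {1}fE rootZ ?lead_coef_eq0 // root_prod_XsubC.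
Qed.

Lemma prod_roots_le_mahler (f : {poly algC}) (r : seq algC) :
  1 <= `|lead_coef f| -> uniq r -> all (root f) r ->
  \prod_(z <- r) `|z| <= mahler_poly f.
Proof.
move=> lead1 ur /allP rootr.
have f0 : f != 0 by rewrite -lead_coef_eq0 -normr_gt0 (lt_le_trans ltr01 lead1).
have le_prod := prod_norm_le_prod_max1 ur (fun z zr => root_mem_poly_roots f0 (rootr z zr)).
apply: le_trans le_prod _.
by rewrite /mahler_poly ler_peMl ?(le_trans ler01 (prod_max1_norm_ge1 _)).
Qed.

Lemma norm_lead_coef_intr_ge1 {p : {poly int}} :
  p != 0 -> 1 <= `|lead_coef (map_poly intr p : {poly algC})|.
Proof.
move=> p0; rewrite lead_coef_map_inj //; last exact: intr_inj.
by rewrite -intr_norm ler1z -gtz0_ge1 normr_gt0 lead_coef_eq0.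
Qed.

Section IntegerPolynomial.

Context {p : {poly int}}.
Hypothesis p0 : p != 0.

Local Notation pC := (map_poly intr p : {poly algC}).

Lemma norm_root_le_mahler {x : algC} : root pC x -> `|x| <= mahler_poly pC.
Proof.
move=> px; have := prod_roots_le_mahler pC [:: x] (norm_lead_coef_intr_ge1 p0).
by rewrite big_seq1 /= px; apply.
Qed.

Lemma norm_mul_roots_le_mahler {x y : algC} :
  root pC x -> root pC y -> x != y -> `|x| * `|y| <= mahler_poly pC.
Proof.
move=> px py xy; have := prod_roots_le_mahler pC [:: x; y] (norm_lead_coef_intr_ge1 p0).
by rewrite big_cons big_seq1 /= px py !inE xy; apply.
Qed.

End IntegerPolynomial.

Lemma squarefreeM {m n : nat} :
  squarefree m -> squarefree n -> coprime m n -> squarefree (m * n).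
Proof.
move=> sqm sqn cop p pp; apply/negP => ppmn.
have [pn | pNn] := boolP (p %| n)%N.
- have pNm : ~~ (p %| m)%N.
    apply/negP => pm; have : (p %| gcdn m n)%N by rewrite dvdn_gcd pm.
    by rewrite (eqP cop) dvdn1 => /eqP p1; rewrite p1 in pp.
  have cop_pp_m : coprime (p * p) m by rewrite coprimeMl (prime_coprime _ pp) pNm.
  by move: (sqn p pp); rewrite -(Gauss_dvdr _ cop_pp_m) ppmn.
- have cop_pp_n : coprime (p * p) n by rewrite coprimeMl (prime_coprime _ pp) pNn.
  by move: (sqm p pp); rewrite -(Gauss_dvdl _ cop_pp_n) ppmn.
Qed.

Lemma denq_sqr_squarefree_int {k : nat} {q : rat} {z : int} :
  squarefree k -> q ^+ 2 * k%:R = z%:~R -> denq q = 1.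
Proof.
move=> sqk qkE.
have d_gt0 := denq_gt0 q.
set r := numq q in qkE *; set d := denq q in qkE d_gt0 *.
have qE : q = r%:~R / d%:~R by rewrite divq_num_den.
have d0 : (d%:~R : rat) != 0 by rewrite intr_eq0 gt_eqF.
have rkE : (r ^+ 2 * k%:R = z * d ^+ 2 :> int).
  apply: (@intr_inj rat); rewrite !rmorphM /= -qkE qE; field.
  by rewrite d0.
have rkE_nat : (`|r| ^ 2 * k = `|z| * `|d| ^ 2)%N.
  by have := congr1 absz rkE; rewrite !abszM natz /= !expnS !expn0 !muln1.
have cop : coprime (`|d| ^ 2) (`|r| ^ 2).
  by rewrite coprimeXl // coprimeXr // coprime_sym coprime_num_den.
have dk : (`|d| ^ 2 %| k)%N by rewrite -(Gauss_dvdr _ cop) rkE_nat dvdn_mull.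
suff d1 : `|d|%N = 1%N by rewrite -(gez0_abs (ltW d_gt0)) d1.
apply/eqP; rewrite eqn_leq absz_gt0 gt_eqF // andbT leqNgt; apply/negP => d_gt1.
have := sqk _ (pdiv_prime d_gt1); rewrite (dvdn_trans _ dk) //.
by rewrite expnS expn1 dvdn_mul // pdiv_dvd.
Qed.

(* An algebraic integer q x with q rational and x^2 = k squarefree forces q to be
   a nonzero integer. *)
Lemma norm_sqrt_le_Aint {k : nat} {q : rat} {x : algC} :
  squarefree k -> x ^+ 2 = k%:R -> ratr q * x \in Aint -> q != 0 ->
  `|x| <= `|ratr q * x|.
Proof.
move=> sqk x2 qxA q0.
have qx2 : (ratr q * x) ^+ 2 = ratr (q ^+ 2 * k%:R) :> algC.
  by rewrite exprMn x2 rmorphM rmorphXn /= rmorph_nat.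
have : (ratr q * x) ^+ 2 \is a Num.int.
  by apply: Cint_rat_Aint; [rewrite qx2 Crat_rat | rewrite rpredX].
move=> /intrP [z]; rewrite qx2 -(ratr_int _ z) => /fmorph_inj /(denq_sqr_squarefree_int sqk) dq.
have qE : q = (numq q)%:~R by rewrite -[LHS]divq_num_den dq divr1.
rewrite normrM ler_peMl // qE ratr_int -intr_norm ler1z -gtz0_ge1 normr_gt0.
by rewrite numq_eq0.
Qed.

Lemma sqrtC_nat_Aint (k : nat) : sqrtC (k%:R : algC) \in Aint.
Proof.
apply: (@root_monic_Aint ('X^2 - (k%:R)%:P)).
- by rewrite /root !hornerE sqrtCK subrr.
- exact: monicXnsubC.
- by rewrite polyOverXnsubC rpred_nat.
Qed.

Definition sign (b : bool) : algC := if b then 1 else -1.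

Lemma rmorph_sqrtC_sign (f : {rmorphism algC -> algC}) (k : nat) :
  f (sqrtC k%:R) = sign (f (sqrtC k%:R) == sqrtC k%:R) * sqrtC k%:R.
Proof.
case: eqP => [->|ne]; first by rewrite mul1r.
have : f (sqrtC k%:R) ^+ 2 == sqrtC k%:R ^+ 2 by rewrite -rmorphXn sqrtCK rmorph_nat.
by rewrite eqf_sqr => /orP [/eqP // | /eqP ->]; rewrite mulN1r.
Qed.

Definition sqrt_signs (m n : nat) (f : {rmorphism algC -> algC}) : bool * bool :=
  (f (sqrtC m%:R) == sqrtC m%:R, f (sqrtC n%:R) == sqrtC n%:R).

Definition biquad_conj (m n : nat) (a b c d : rat) (y : bool * bool) : algC :=
  let u := sign y.1 * sqrtC m%:R in let v := sign y.2 * sqrtC n%:R in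
  ratr a + ratr b * u + ratr c * v + ratr d * (u * v).

Definition biquad_basis (m n : nat) (k : 'I_4) : algC :=
  match val k with
  | 0 => 1 | 1 => sqrtC m%:R | 2 => sqrtC n%:R | _ => sqrtC m%:R * sqrtC n%:R
  end.

Definition basis_sign (k : 'I_4) (y : bool * bool) : algC :=
  match val k with 0 => 1 | 1 => sign y.1 | 2 => sign y.2 | _ => sign y.1 * sign y.2 end.

Section BiquadraticEmbeddings.

Context {m n : nat}.

Local Notation sm := (sqrtC (m%:R : algC)).
Local Notation sn := (sqrtC (n%:R : algC)).

Lemma rmorph_biquad (f : {rmorphism algC -> algC}) (a b c d : rat) :
  f (ratr a + ratr b * sm + ratr c * sn + ratr d * (sm * sn)) =
  biquad_conj m n a b c d (sqrt_signs m n f).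
Proof.
rewrite /biquad_conj /sqrt_signs /= -(rmorph_sqrtC_sign f m) -(rmorph_sqrtC_sign f n).
by rewrite !rmorphD !(rmorphM f (ratr _)) (rmorphM f sm) !fmorph_rat.
Qed.

Lemma rmorph_biquad_basis (f : {rmorphism algC -> algC}) (k : 'I_4) :
  f (biquad_basis m n k) = basis_sign k (sqrt_signs m n f) * biquad_basis m n k.
Proof.
rewrite /biquad_basis /basis_sign /sqrt_signs.
case: k => [[|[|[|[|k]]]] lt_k4] //=.
- by rewrite rmorph1 mul1r.
- exact: rmorph_sqrtC_sign.
- exact: rmorph_sqrtC_sign.
- by rewrite rmorphM /= {1}(rmorph_sqrtC_sign f m) {1}(rmorph_sqrtC_sign f n) mulrACA.
Qed.

Lemma biquad_basis_integral (k : 'I_4) :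
  ring_of_integers (biquad m n) (biquad_basis m n k).
Proof.
rewrite /biquad_basis; case: k => [[|[|[|[|k]]]] lt_k4] //=; split.
- by exists 1, 0, 0, 0; rewrite !(rmorph0, rmorph1, mul0r, addr0).
- exact: Aint1.
- by exists 0, 1, 0, 0; rewrite !(rmorph0, rmorph1, mul0r, mul1r, addr0, add0r).
- exact: sqrtC_nat_Aint.
- by exists 0, 0, 1, 0; rewrite !(rmorph0, rmorph1, mul0r, mul1r, addr0, add0r).
- exact: sqrtC_nat_Aint.
- by exists 0, 0, 0, 1; rewrite !(rmorph0, rmorph1, mul0r, mul1r, addr0, add0r).
- by rewrite rpredM ?sqrtC_nat_Aint.
Qed.

Context {s : 'I_4 -> {rmorphism algC -> algC}}.
Hypothesis s_emb : all_embeddings (biquad m n) s.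

Lemma sqrt_signs_bij : bijective (fun i => sqrt_signs m n (s i)).
Proof.
apply: inj_card_bij; last by rewrite card_prod card_bool card_ord.
move=> i j eq_ij; apply/eqP; apply/negPn/negP => /s_emb [x [a [b [c [d ->]]]]].
by rewrite !rmorph_biquad eq_ij eqxx.
Qed.

Lemma sum_sqrt_signs (G : bool * bool -> algC) :
  \sum_i G (sqrt_signs m n (s i)) =
  G (true, true) + G (true, false) + G (false, true) + G (false, false).
Proof.
transitivity (\sum_y G y); first by rewrite (reindex _ (onW_bij _ sqrt_signs_bij)).
rewrite (eq_bigr (fun y => G (y.1, y.2))); last by case.
by rewrite -(pair_bigA _ (fun e1 e2 => G (e1, e2))) /= !big_bool /= !addrA.
Qed.

Definition basis_embedding_mx : 'M[algC]_4 := \matrix_(i, k) s i (biquad_basis m n k).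

Lemma basis_embedding_mx_gram :
  basis_embedding_mx^T *m basis_embedding_mx =
  diag_mx (\row_k (4 * biquad_basis m n k ^+ 2)).
Proof.
apply/matrixP => k l; rewrite !mxE.
under eq_bigr do rewrite !mxE !rmorph_biquad_basis mulrACA.
rewrite (sum_sqrt_signs (fun y =>
  basis_sign k y * basis_sign l y * (biquad_basis m n k * biquad_basis m n l))).
by case: k => [[|[|[|[|k]]]] ?]; case: l => [[|[|[|[|l]]]] ?] //=;
  rewrite /biquad_basis /basis_sign /sign /=; ring.
Qed.

Lemma det_basis_embedding_mx_sqr :
  \det basis_embedding_mx ^+ 2 = (4 * (sm * sn)) ^+ 4.
Proof.
rewrite expr2 -{1}det_tr -det_mulmx basis_embedding_mx_gram det_diag.
by rewrite !big_ord_recr big_ord0 /= !mxE /biquad_basis /=; ring.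
Qed.

(* Expressing the basis 1, sqrt m, sqrt n, sqrt m sqrt n in the integral basis w
   gives an integer matrix, whose determinant is a nonzero integer. *)
Lemma abs_disc_le (w : 'I_4 -> algC) :
  (0 < m)%N -> (0 < n)%N -> integral_basis (ring_of_integers (biquad m n)) w ->
  abs_disc w s <= (4 * (sm * sn)) ^+ 4.
Proof.
move=> m_gt0 n_gt0 [_ w_span _].
have /fin_all_exists [C CE] : forall k, exists c : 'I_4 -> int,
    biquad_basis m n k = \sum_i (c i)%:~R * w i.
  by move=> k; apply: w_span; apply: biquad_basis_integral.
set A := \matrix_(i, j) s i (w j).
set Cm := \matrix_(k, j) C k j : 'M[int]_4.
have detB : \det basis_embedding_mx = \det A * (\det Cm)%:~R.
  suff -> : basis_embedding_mx = A *m (map_mx intr Cm)^T.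
    by rewrite det_mulmx det_tr det_map_mx.
  apply/matrixP => i k; rewrite !mxE CE rmorph_sum; apply: eq_bigr => j _.
  by rewrite !mxE rmorphM /= rmorph_int mulrC.
have sm0 : sm != 0 by rewrite sqrtC_eq0 pnatr_eq0 -lt0n.
have sn0 : sn != 0 by rewrite sqrtC_eq0 pnatr_eq0 -lt0n.
have detC0 : \det Cm != 0.
  apply/eqP => detC0; move/eqP: det_basis_embedding_mx_sqr.
  rewrite detB detC0 mulr0 expr0n eq_sym expf_eq0 /= !mulf_eq0 pnatr_eq0 /=.
  by rewrite (negbTE sm0) (negbTE sn0).
have detC1 : 1 <= `|(\det Cm)%:~R ^+ 2 : algC|.
  by rewrite normrX exprn_ege1 // -intr_norm ler1z -gtz0_ge1 normr_gt0.
rewrite /abs_disc -/A -det_basis_embedding_mx_sqr -[X in _ <= X]ger0_norm; last first.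
  by rewrite det_basis_embedding_mx_sqr exprn_ge0 // !mulr_ge0 ?sqrtC_ge0 ?ler0n.
by rewrite detB exprMn [X in _ <= X]normrM ler_peMr ?normr_ge0.
Qed.

Lemma root4_abs_disc_le {w : 'I_4 -> algC} :
  (0 < m)%N -> (0 < n)%N -> integral_basis (ring_of_integers (biquad m n)) w ->
  4.-root (abs_disc w s) <= 4 * (sm * sn).
Proof.
move=> m_gt0 n_gt0 w_basis.
have smn_ge0 : 0 <= 4 * (sm * sn) by rewrite !mulr_ge0 ?sqrtC_ge0 ?ler0n.
rewrite -[X in _ <= X](exprCK (isT : (0 < 4)%N) smn_ge0).
by rewrite ler_rootC ?nnegrE ?normr_ge0 ?exprn_ge0 ?abs_disc_le.
Qed.

End BiquadraticEmbeddings.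

Section Conjugates.

Variable f : {rmorphism algC -> algC}.

Lemma map_poly_rmorph_ratr (q : {poly rat}) : map_poly f (map_poly ratr q) = map_poly ratr q.
Proof. by rewrite -map_poly_comp; apply: eq_map_poly => z /=; rewrite fmorph_rat. Qed.

Lemma root_intr_poly_rmorph (p : {poly int}) (x : algC) :
  root (map_poly intr p) x -> root (map_poly intr p) (f x).
Proof.
move=> /(rmorph_root f); rewrite -map_poly_comp.
by congr (root _ _); apply: eq_map_poly => z /=; rewrite rmorph_int.
Qed.

End Conjugates.

Lemma embeddings_generator_inj {K : algC -> Prop} {s : 'I_4 -> {rmorphism algC -> algC}}
    {alpha : algC} :
  generates alpha K -> all_embeddings K s -> injective (fun i => s i alpha).
Proof.
move=> gen s_emb i j eq_ij; apply/eqP; apply/negPn/negP => /s_emb [x /(gen x).2 [q ->]].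
by rewrite -!horner_map !map_poly_rmorph_ratr /= eq_ij eqxx.
Qed.

Section ConjugateBounds.

Context {m n : nat} {a b c d : rat} {F : bool * bool -> algC} {M : algC}.

Local Notation sm := (sqrtC (m%:R : algC)).
Local Notation sn := (sqrtC (n%:R : algC)).

Hypothesis F_conj : F =1 biquad_conj m n a b c d.

Hypothesis F_Aint : forall y, F y \in Aint.
Hypothesis norm_F_le : forall y, `|F y| <= M.
Hypothesis norm_F2_le : forall y y', y != y' -> `|F y| * `|F y'| <= M.

Lemma sqrt_mn_le_mahler_d : squarefree (m * n) -> d != 0 -> sm * sn <= 4 * M.
Proof.
move=> sqmn d0; have four0 : (4 : rat) != 0 by [].
have FE : ratr (4 * d) * (sm * sn) =
    F (true, true) - F (true, false) - F (false, true) + F (false, false).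
  by rewrite !F_conj /biquad_conj /sign /= rmorphM /= rmorph_nat; ring.
have smn2 : (sm * sn) ^+ 2 = (m * n)%:R by rewrite exprMn !sqrtCK natrM.
have smn_Aint : ratr (4 * d) * (sm * sn) \in Aint by rewrite FE !(rpredB, rpredD) ?F_Aint.
have := norm_sqrt_le_Aint sqmn smn2 smn_Aint (mulf_neq0 four0 d0).
rewrite ger0_norm ?mulr_ge0 ?sqrtC_ge0 ?ler0n // FE => /le_trans; apply.
have -> : 4 * M = M + M + M + M by ring.
rewrite (le_trans (ler_normD _ _)) // lerD // (le_trans (ler_normB _ _)) // lerD //.
by rewrite (le_trans (ler_normB _ _)) // lerD.
Qed.

Lemma sqrt_mn_le_mahler_bc :
  squarefree m -> squarefree n -> d = 0 -> b != 0 -> c != 0 -> sm * sn <= 8 * M.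
Proof.
move=> sqm sqn d0 b0 c0; have four0 : (4 : rat) != 0 by [].
have Fb : ratr (4 * b) * sm = F (true, true) - F (false, true) + F (true, false) - F (false, false).
  by rewrite !F_conj /biquad_conj /sign /= rmorphM /= rmorph_nat; ring.
have Fc : ratr (4 * c) * sn = F (true, true) + F (false, true) - F (true, false) - F (false, false).
  by rewrite !F_conj /biquad_conj /sign /= rmorphM /= rmorph_nat; ring.
have Fbc : ratr (4 * b) * sm * (ratr (4 * c) * sn) =
    4 * (F (false, true) * F (true, false) - F (true, true) * F (false, false)).
  by rewrite !F_conj /biquad_conj /sign /= d0 !rmorphM /= rmorph0 rmorph_nat; ring.
have b_Aint : ratr (4 * b) * sm \in Aint by rewrite Fb !(rpredB, rpredD) ?F_Aint.
have sm_le : sm <= `|ratr (4 * b) * sm|.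
  rewrite -[X in X <= _]ger0_norm ?sqrtC_ge0 ?ler0n //.
  exact: norm_sqrt_le_Aint (sqrtCK _) b_Aint (mulf_neq0 four0 b0).
have c_Aint : ratr (4 * c) * sn \in Aint by rewrite Fc !(rpredB, rpredD) ?F_Aint.
have sn_le : sn <= `|ratr (4 * c) * sn|.
  rewrite -[X in X <= _]ger0_norm ?sqrtC_ge0 ?ler0n //.
  exact: norm_sqrt_le_Aint (sqrtCK _) c_Aint (mulf_neq0 four0 c0).
have smn_le : sm * sn <= `|ratr (4 * b) * sm| * `|ratr (4 * c) * sn|.
  by rewrite ler_pM ?sqrtC_ge0 ?ler0n.
apply: le_trans smn_le _; rewrite -normrM Fbc normrM ger0_norm ?ler0n //.
have -> : 8 * M = 4 * (M + M) by ring.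
rewrite ler_wpM2l ?ler0n // (le_trans (ler_normB _ _)) // !normrM lerD ?norm_F2_le //.
Qed.

Hypothesis F_inj : injective F.

Lemma sqrt_mn_le_mahler :
  squarefree m -> squarefree n -> coprime m n -> sm * sn <= 8 * M.
Proof.
move=> sqm sqn cop; have M_ge0 : 0 <= M := le_trans (normr_ge0 _) (norm_F_le (true, true)).
have [d0 | d0] := eqVneq d 0; last first.
  apply: le_trans (sqrt_mn_le_mahler_d (squarefreeM sqm sqn cop) d0) _.
  by rewrite ler_wpM2r // ler_nat.
apply: sqrt_mn_le_mahler_bc => //.
- apply/eqP => b0; suff /F_inj : F (true, true) = F (false, true) by [].
  by rewrite !F_conj /biquad_conj /sign /= b0 d0 !rmorph0 !mul0r.
- apply/eqP => c0; suff /F_inj : F (true, true) = F (true, false) by [].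
  by rewrite !F_conj /biquad_conj /sign /= c0 d0 !rmorph0 !mul0r.
Qed.

End ConjugateBounds.

Theorem corollary3p2 (m n : nat) (w : 'I_4 -> algC)
    (s : 'I_4 -> {rmorphism algC -> algC}) (alpha M : algC) :
  (1 < m)%N -> (1 < n)%N -> squarefree m -> squarefree n -> coprime m n ->
  integral_basis (ring_of_integers (biquad m n)) w ->
  all_embeddings (biquad m n) s ->
  ring_of_integers (biquad m n) alpha ->
  generates alpha (biquad m n) ->
  mahler_alg_is alpha M ->
  (96 * sqrtC 2)^-1 * 4.-root (abs_disc w s) <= M.
Proof.
move=> m_gt1 n_gt1 sqm sqn cop w_basis s_emb [[a [b [c [d alphaE]]]] alpha_Aint] gen.
move=> [p [p0 p_alpha _ _] ->].
have [g _ g_signs] := sqrt_signs_bij s_emb.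
pose F y := s (g y) alpha.
have F_conj : F =1 biquad_conj m n a b c d by move=> y; rewrite /F alphaE rmorph_biquad g_signs.
have F_inj : injective F := inj_comp (embeddings_generator_inj gen s_emb) (can_inj g_signs).
have F_Aint y : F y \in Aint by rewrite Aint_aut.
have F_root y : root (map_poly intr p) (F y) by apply: root_intr_poly_rmorph.
have F_le y : `|F y| <= mahler_poly (map_poly intr p) := norm_root_le_mahler p0 (F_root y).
have F2_le y y' : y != y' -> `|F y| * `|F y'| <= mahler_poly (map_poly intr p).
  by rewrite -(inj_eq F_inj); apply: norm_mul_roots_le_mahler.
have smn_le := sqrt_mn_le_mahler F_conj F_Aint F_le F2_le F_inj sqm sqn cop.
have disc_le := root4_abs_disc_le s_emb (ltnW m_gt1) (ltnW n_gt1) w_basis.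
have sqrt2_ge1 : 1 <= sqrtC (2 : algC) by rewrite -{1}sqrtC1 ler_sqrtC ?nnegrE ?ler0n // ler1n.
rewrite ler_pdivrMl ?mulr_gt0 ?ltr0n ?(lt_le_trans ltr01 sqrt2_ge1) //.
apply: le_trans disc_le (le_trans (ler_wpM2l (ler0n _ 4) smn_le) _).
rewrite mulrA -natrM ler_wpM2r ?(le_trans (normr_ge0 _) (F_le (true, true))) //.
by rewrite (le_trans (_ : 32%:R <= 96)) ?ler_nat // ler_peMr ?ler0n.
Qed.
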